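(* Consider, for $x\ge0$ and $a>0$, the planar system $$\dot x=1,\qquad \dot y=-ay-\sin\!\left[\pi x\left(1+\tfrac12\lambda\right)\right],$$ with $\lambda=\operatorname{sign}(y)$ for $y\ne0$ and $\lambda\in(-1,1)$ on $y=0$. This system does not have non-sliding periodic solutions.
   Context: For $y>0$ the system is $\dot y=-ay-\sin(3\pi x/2)$ and for $y<0$ it is $\dot y=-ay-\sin(\pi x/2)$. The sliding manifold is $\Lambda^N=\{(x,0):x\in(\frac{2n}{3},2n),\ n\ge1\}$, the set of points of $y=0$ where some $\lambda\in(-1,1)$ gives $\sin[\pi x(1+\lambda/2)]=0$; a solution may remain on $y=0$ (with $\dot x=1$) only while on $\Lambda^N$. A periodic solution is called sliding if part of it lies on $\Lambda^N$ (here: if at least one of its points lies on $\Lambda^N$), and non-sliding otherwise. *)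

From HB Require Import structures.
From mathcomp Require Import all_boot all_order all_algebra.
From mathcomp Require Import all_classical all_reals all_analysis.
Set Implicit Arguments. Unset Strict Implicit. Unset Printing Implicit Defensive.
Import Order.TTheory GRing.Theory Num.Theory.
Import numFieldNormedType.Exports.
Local Open Scope classical_set_scope.
Local Open Scope ring_scope.

Section Defs.
Variable R : realType.

Definition rhs (a x y lam : R) : R :=
  - a * y - sin (pi * x * (1 + lam / 2)).

Definition admissible_lambda (y lam : R) : Prop :=
  (y > 0 -> lam = 1) /\ (y < 0 -> lam = -1) /\ (y = 0 -> -1 < lam < 1).

Definition in_LambdaN (x : R) : Prop :=
  exists n : nat, (1 <= n)%N /\ (2 * n%:R) / 3 < x /\ x < 2 * n%:R.

(* Since xdot = 1, a solution is parametrised by x: it is a function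
   x |-> y(x) defined for x >= x0 (x0 >= 0).  Solutions are taken in the
   Filippov/Caratheodory sense: y is continuous and, for some selection
   lambda(s) admissible at (s, y(s)), y is the indefinite (Lebesgue)
   integral of rhs a s (y s) (lambda s) on every compact interval. *)
Definition is_solution (a x0 : R) (y : R -> R) : Prop :=
  0 <= x0 /\
  {within [set s | x0 <= s], continuous y} /\
  exists lam : R -> R,
    (forall s, x0 <= s -> admissible_lambda (y s) (lam s)) /\
    forall x1 x2, x0 <= x1 -> x1 <= x2 ->
      (lebesgue_measure).-integrable `[x1, x2]%classic
         (fun s => (rhs a s (y s) (lam s))%:E) /\
      y x2 - y x1 =
        Rintegral lebesgue_measure `[x1, x2]%classic (fun s => rhs a s (y s) (lam s)).

Definition is_periodic_from (x0 : R) (y : R -> R) : Prop :=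
  exists T : R, 0 < T /\ forall x, x0 <= x -> y (x + T) = y x.

Definition is_sliding (x0 : R) (y : R -> R) : Prop :=
  exists x, x0 <= x /\ y x = 0 /\ in_LambdaN x.

End Defs.

From HB Require Import structures.
From mathcomp Require Import all_boot all_order all_algebra.
From mathcomp Require Import all_classical all_reals all_analysis.
From mathcomp Require Import ring lra.
Import Order.TTheory GRing.Theory Num.Theory.
Import numFieldNormedType.Exports.
Local Open Scope classical_set_scope.
Local Open Scope ring_scope.

(* A periodic solution that vanishes somewhere vanishes, by periodicity, at
   points x > 2/3, and the intervals (2n/3, 2n) cover (2/3, +oo), so it meets
   Lambda^N.  Otherwise y keeps a constant sign, lambda = sign y is constant and,
   y being bounded away from 0 by its extremum over one period, the right-hand
   side (or its opposite) is at most -k + e sin (c x) with k > 0.  Integrating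
   over N periods gives 0 = y (x0 + N T) - y x0 <= -k N T + 2 |e| / c,
   which fails for large N. *)

Section real_lemmas.
#[local] Set Implicit Arguments.
#[local] Unset Strict Implicit.
Variable R : realType.

Lemma exists_nat_mulr_gt (r T : R) : 0 < T -> exists N : nat, r < N%:R * T.
Proof.
move=> T_gt0; exists (Num.truncn (`|r| / T)).+1.
have /andP[_ lt_trunc] := truncn_itv (divr_ge0 (normr_ge0 r) (ltW T_gt0)).
rewrite -ltr_pdivrMr //; apply: le_lt_trans lt_trunc.
by rewrite ler_pM2r ?invr_gt0 // ler_norm.
Qed.

Lemma in_LambdaN_gt (x : R) : 2 / 3 < x -> in_LambdaN x.
Proof.
move=> x_gt; have x_ge0 : 0 <= x / 2 by lra.
have /andP[] := truncn_itv x_ge0.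
set m := Num.truncn (x / 2) => m_le m_gt.
exists m.+1; split => //; split; last by lra.
case: m m_le m_gt => [|m] m_le m_gt; first by rewrite mulr1.
rewrite -[m.+2]addn1 natrD -natr1 in m_le *; have : 0 <= m%:R :> R by []; lra.
Qed.

Lemma Rintegral_le_antiderivative (f g G : R -> R) (u v : R) : u < v ->
  lebesgue_measure.-integrable `[u, v] (EFin \o f) -> continuous g ->
  (forall x : R, is_derive x 1 G (g x)) -> {in `[u, v], forall s, f s <= g s} ->
  Rintegral lebesgue_measure `[u, v] f <= G v - G u.
Proof.
move=> uv fi gc dG fg.
have gi : lebesgue_measure.-integrable `[u, v] (EFin \o g).
  apply: continuous_compact_integrable; first exact: segment_compact.
  exact: continuous_subspaceT.
have Gc : continuous G.
  move=> x; have [Gx _] := dG x.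
  exact/differentiable_continuous/derivable1_diffP.
apply: le_trans (le_Rintegral _ fi gi fg) _ => //.
rewrite /Rintegral (@continuous_FTC2 _ g G) //=.
- exact: continuous_subspaceT.
- split; first by move=> x _; have [] := dG x.
  + exact/cvg_at_right_filter/Gc.
  + exact/cvg_at_left_filter/Gc.
- by move=> x _; rewrite derive1E derive_val.
Qed.

Lemma Rintegral_le_sin_drift (f : R -> R) (c k e u v : R) : 0 < c -> u < v ->
  lebesgue_measure.-integrable `[u, v] (EFin \o f) ->
  {in `[u, v], forall s, f s <= - k + e * sin (c * s)} ->
  Rintegral lebesgue_measure `[u, v] f <= - k * (v - u) + 2 * `|e| / c.
Proof.
move=> c_gt0 uv fi fle.
pose G t := - k * t - e / c * cos (c * t).
apply: le_trans (Rintegral_le_antiderivative (G := G) uv fi _ _ fle) _.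
- move=> x; apply: cvgD; first exact: cvg_cst.
  apply: cvgM; first exact: cvg_cst.
  apply: (continuous_comp (f := *%R c)); last exact: continuous_sin.
  by apply: cvgM; [exact: cvg_cst | exact: cvg_id].
- move=> x; apply: is_derive_eq.
  rewrite /GRing.scale /= !mulr1; field; exact: lt0r_neq0.
have -> : G v - G u = - k * (v - u) + e * (cos (c * u) - cos (c * v)) / c.
  rewrite /G; field; exact: lt0r_neq0.
rewrite lerD2l ler_pM2r ?invr_gt0 //.
apply: le_trans (ler_norm _) _; rewrite normrM mulrC ler_wpM2r //.
apply: le_trans (ler_normB _ _) _.
by have := cos_max (c * u); have := cos_max (c * v); lra.
Qed.

Lemma Rintegral_periods_lt0 (f : R -> R) (c k e u T : R) :
  0 < c -> 0 < k -> 0 < T ->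
  (forall v, u <= v -> lebesgue_measure.-integrable `[u, v] (EFin \o f)) ->
  (forall s, u <= s -> f s <= - k + e * sin (c * s)) ->
  exists N : nat, Rintegral lebesgue_measure `[u, u + N%:R * T] f < 0.
Proof.
move=> c_gt0 k_gt0 T_gt0 fi fle.
have [N] := exists_nat_mulr_gt (2 * `|e| / c) (mulr_gt0 k_gt0 T_gt0).
rewrite mulrCA; set w := N%:R * T => drift_lt.
have drift_ge0 : 0 <= 2 * `|e| / c by rewrite divr_ge0 ?mulr_ge0 // ltW.
have w_gt0 : 0 < w by rewrite -(pmulr_rgt0 _ k_gt0); lra.
have uw : u < u + w by rewrite ltrDl.
exists N; apply: le_lt_trans (Rintegral_le_sin_drift c_gt0 uw (fi _ (ltW uw)) _) _.
  by move=> s; rewrite in_itv /= => /andP[us _]; exact: fle.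
rewrite addrAC subrr add0r; lra.
Qed.

Lemma continuous_within_segment (x0 v : R) (y : R -> R) :
  {within [set s | x0 <= s], continuous y} -> {within `[x0, v], continuous y}.
Proof.
by apply: continuous_subspaceW => t /=; rewrite in_itv /= => /andP[].
Qed.

Lemma nonvanishing_sign (x0 : R) (y : R -> R) :
  {within [set s | x0 <= s], continuous y} -> (forall s, x0 <= s -> y s != 0) ->
  (forall s, x0 <= s -> 0 < y s) \/ (forall s, x0 <= s -> y s < 0).
Proof.
move=> y_cont y_neq0.
have y0_neq0 := y_neq0 _ (lexx x0).
have same_sign s : x0 <= s -> 0 < y x0 * y s.
  move=> s_ge; rewrite ltNge; apply/negP => prod_le0.
  have [t] : exists2 t, t \in `[x0, s] & y t = 0.
    apply: IVT => //; first exact: continuous_within_segment.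
    rewrite ge_min le_max; move: y0_neq0; rewrite neq_lt => /orP[] y0.
    - by apply/andP; split; apply/orP; [left|right]; nra.
    - by apply/andP; split; apply/orP; [right|left]; nra.
  by rewrite in_itv /= => /andP[t_ge _]; apply/eqP/y_neq0.
move: y0_neq0; rewrite neq_lt => /orP[y0_lt|y0_gt]; [right|left] => s s_ge.
- by rewrite -(nmulr_rgt0 _ y0_lt); exact: same_sign.
- by rewrite -(pmulr_rgt0 _ y0_gt); exact: same_sign.
Qed.

Section periodic.
Variables (x0 T : R) (y : R -> R).
Hypotheses (T_gt0 : 0 < T) (y_per : forall x, x0 <= x -> y (x + T) = y x).

Lemma periodic_natmul (N : nat) (x : R) : x0 <= x -> y (x + N%:R * T) = y x.
Proof.
elim: N x => [|N IH] x x_ge; first by rewrite mul0r addr0.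
rewrite -natr1 mulrDl mul1r addrA y_per ?IH //.
by rewrite (le_trans x_ge) // lerDl mulr_ge0 // ltW.
Qed.

Lemma periodic_value_in_period (s : R) :
  x0 <= s -> exists2 t, t \in `[x0, x0 + T] & y t = y s.
Proof.
move=> s_ge.
have : 0 <= (s - x0) / T by rewrite divr_ge0 ?subr_ge0 // ltW.
move=> /truncn_itv /andP[]; set N := Num.truncn _.
rewrite ler_pdivlMr // ltr_pdivrMr // -natr1 => N_le N_gt.
exists (s - N%:R * T); first by rewrite in_itv /=; apply/andP; split; lra.
by rewrite -[in RHS](subrK (N%:R * T) s) periodic_natmul //; lra.
Qed.

Lemma periodic_min_attained : {within [set s | x0 <= s], continuous y} ->
  exists2 m, x0 <= m & forall s, x0 <= s -> y m <= y s.
Proof.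
move=> y_cont; have x0_le : x0 <= x0 + T by rewrite lerDl ltW.
have [m + m_min] := EVT_min x0_le (continuous_within_segment y_cont).
rewrite in_itv /= => /andP[m_ge _]; exists m => // s /periodic_value_in_period[t].
by move=> /m_min + <-.
Qed.

Lemma periodic_max_attained : {within [set s | x0 <= s], continuous y} ->
  exists2 M, x0 <= M & forall s, x0 <= s -> y s <= y M.
Proof.
move=> y_cont; have x0_le : x0 <= x0 + T by rewrite lerDl ltW.
have [M + M_max] := EVT_max x0_le (continuous_within_segment y_cont).
rewrite in_itv /= => /andP[M_ge _]; exists M => // s /periodic_value_in_period[t].
by move=> /M_max + <-.
Qed.

Lemma periodic_zero_sliding (z : R) : x0 <= z -> y z = 0 -> is_sliding x0 y.
Proof.
move=> z_ge yz0; have [N] := exists_nat_mulr_gt (2 / 3 - z) T_gt0.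
have NT_ge0 : 0 <= N%:R * T by rewrite mulr_ge0 // ltW.
exists (z + N%:R * T); split; first lra.
by rewrite periodic_natmul // yz0; split => //; apply: in_LambdaN_gt; lra.
Qed.
End periodic.

Section periodic_solution.
Variables (a x0 T : R) (y lam : R -> R).
Hypotheses (a_gt0 : 0 < a) (T_gt0 : 0 < T)
  (y_cont : {within [set s | x0 <= s], continuous y})
  (y_per : forall x, x0 <= x -> y (x + T) = y x)
  (lam_adm : forall s, x0 <= s -> admissible_lambda (y s) (lam s))
  (y_int : forall x1 x2, x0 <= x1 -> x1 <= x2 ->
     lebesgue_measure.-integrable `[x1, x2] (fun s => (rhs a s (y s) (lam s))%:E) /\
     y x2 - y x1 = Rintegral lebesgue_measure `[x1, x2] (fun s => rhs a s (y s) (lam s))).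

Lemma rhs_not_drift_bounded (r c k e : R) : 0 < c -> 0 < k ->
  ~ (forall s, x0 <= s -> r * rhs a s (y s) (lam s) <= - k + e * sin (c * s)).
Proof.
move=> c_gt0 k_gt0 rhs_le.
have rhs_int v : x0 <= v -> lebesgue_measure.-integrable `[x0, v]
    (EFin \o fun s => r * rhs a s (y s) (lam s)).
  move=> v_ge; have [rhs_int _] := y_int (lexx x0) v_ge.
  by apply: eq_integrable (integrableZl _ r rhs_int) => // s _ /=; rewrite EFinM.
have [N] := Rintegral_periods_lt0 c_gt0 k_gt0 T_gt0 rhs_int rhs_le.
have NT_ge : x0 <= x0 + N%:R * T by rewrite lerDl mulr_ge0 // ltW.
have [rhs_intN y_eq] := y_int (lexx x0) NT_ge.
by rewrite RintegralZl // -y_eq (periodic_natmul T_gt0 y_per) // subrr mulr0 ltxx.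
Qed.

Lemma periodic_solution_not_positive : ~ (forall s, x0 <= s -> 0 < y s).
Proof.
move=> y_gt0; have [m m_ge y_min] := periodic_min_attained T_gt0 y_per y_cont.
apply: (@rhs_not_drift_bounded 1 (pi * (1 + 1 / 2)) (a * y m) (-1)).
- by rewrite mulr_gt0 ?pi_gt0 //; lra.
- by rewrite mulr_gt0 ?y_gt0.
move=> s s_ge; have [lam1 _] := lam_adm s_ge.
rewrite /rhs (lam1 (y_gt0 _ s_ge)) mul1r mulrAC.
by have := ler_wpM2l (ltW a_gt0) (y_min _ s_ge); lra.
Qed.

Lemma periodic_solution_not_negative : ~ (forall s, x0 <= s -> y s < 0).
Proof.
move=> y_lt0; have [M M_ge y_max] := periodic_max_attained T_gt0 y_per y_cont.
apply: (@rhs_not_drift_bounded (-1) (pi * (1 + -1 / 2)) (- (a * y M)) 1).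
- by rewrite mulr_gt0 ?pi_gt0 //; lra.
- by rewrite oppr_gt0 pmulr_rlt0 ?y_lt0.
move=> s s_ge; have [_ [lamN1 _]] := lam_adm s_ge.
rewrite /rhs (lamN1 (y_lt0 _ s_ge)) mulrAC.
by have := ler_wpM2l (ltW a_gt0) (y_max _ s_ge); lra.
Qed.
End periodic_solution.
End real_lemmas.

Theorem theorem3 (R : realType) (a : R) (ha : 0 < a) (x0 : R) (y : R -> R) :
  is_solution a x0 y -> is_periodic_from x0 y -> is_sliding x0 y.
Proof.
move=> [_ [y_cont [lam [lam_adm y_int]]]] [T [T_gt0 y_per]].
have [[z [z_ge yz0]] | no_zero] := pselect (exists z, x0 <= z /\ y z = 0).
  exact: (periodic_zero_sliding T_gt0 y_per z_ge yz0).
have y_neq0 s : x0 <= s -> y s != 0.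
  by move=> s_ge; apply/eqP => ys0; apply: no_zero; exists s.
exfalso; case: (nonvanishing_sign y_cont y_neq0).
- exact: periodic_solution_not_positive ha T_gt0 y_cont y_per lam_adm y_int.
- exact: periodic_solution_not_negative ha T_gt0 y_cont y_per lam_adm y_int.
Qed.
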